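(* Let $C\subseteq\mathbb{F}^n$ be an $[n,k]$ linear code with full support, and let $T=\boldsymbol{\alpha}^1|\mathfrak{s}_1\otimes\cdots\otimes\boldsymbol{\alpha}^k|\mathfrak{s}_k$ be a minimal linear trellis for $C$. Let $\boldsymbol{\beta}^1,\dots,\boldsymbol{\beta}^k\in C$ be such that $\mathfrak{s}_i$ is a minimal span of $\boldsymbol{\beta}^i$ for every $i$. Then $\boldsymbol{\beta}^1,\dots,\boldsymbol{\beta}^k$ is a basis of $C$, and consequently $T'=\boldsymbol{\beta}^1|\mathfrak{s}_1\otimes\cdots\otimes\boldsymbol{\beta}^k|\mathfrak{s}_k$ is also a minimal linear trellis for $C$.
   Context: Let $\mathbb{F}$ be a finite field and $n\ge1$; indices are taken in $\mathbb{Z}_n$. A trellis $T$ of length $n$ over $\mathbb{F}$ consists of pairwise disjoint finite vertex sets $V_i(T)$, $i\in\mathbb{Z}_n$, and edge sets $E_i(T)\subseteq V_i(T)\times\mathbb{F}\times V_{i+1}(T)$. Trellises are trim. $T$ is linear if each $V_i(T)$ is an $\mathbb{F}$-vector space and each $E_i(T)$ a subspace. $C(T)$ is the set of label sequences of closed paths of length $n$ starting in $V_0(T)$. $T'$ is smaller than $T$ if $|V_i(T')|\le|V_i(T)|$ for all $i$ with some strict inequality; a minimal linear trellis for $C$ is a linear trellis $T$ with $C(T)=C$ such that no linear trellis $T'$ with $C(T')=C$ is smaller than $T$. Spans: for $a\in\mathbb{Z}_n$, $0\le l\le n-1$, $[a,a+l]=\{a,\dots,a+l\}\subseteq\mathbb{Z}_n$,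 $(a,a+l]=[a,a+l]\setminus\{a\}$; $(a,l)$ is a span; degenerate spans $\emptyset$ (length $-1$) and $\mathbb{Z}_n$ (length $n$, written $(a,n)$). Partial order: $(a_1,l_1)\le(a_2,l_2)$ iff ($l_1\le l_2<n-1$ and $[a_1,a_1+l_1]\subseteq[a_2,a_2+l_2]$) or ($l_2=n-1$ and $(a_1,a_1+l_1]\subseteq(a_2,a_2+l_2]$) or $l_1=-1$ or $l_2=n$. A vector $\boldsymbol{\alpha}\in\mathbb{F}^n$ has span $(a,l)$, $0\le l\le n-1$, if its support lies in $[a,a+l]$; $\emptyset$ is a span only of $\mathbf{0}$ and $\mathbb{Z}_n$ of every vector. A minimal span of $\boldsymbol{\alpha}$ is a span $\mathfrak{s}$ of $\boldsymbol{\alpha}$ such that no span $\mathfrak{s}'\lneq\mathfrak{s}$ is a span of $\boldsymbol{\alpha}$. Elementary trellis $\boldsymbol{\alpha}|(a,l)$ ($\boldsymbol{\alpha}$ of span $(a,l)$, $0\le l\le n$): $V_i=\mathbb{F}$ for $i\in(a,a+l]$ (all $i$ if $l=n$), $V_i=0$ otherwise, $E_i=\langle(u_i,\alpha_i,u_{i+1})\rangle$ with $u_i=1$ if $i\in(a,a+l]$, else $0$. The product $T\otimes T'$ has $V_i=V_i(T)\times V_i(T')$ and $E_i=\{((v,v'),\alpha+\alpha',(w,w')):(v,\alpha,w)\in E_i(T),(v',\alpha',w')\in E_i(T')\}$; it satisfies $C(T\otimes T')=C(T)+C(T')$. *)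

From HB Require Import structures.
From mathcomp Require Import all_boot all_order all_algebra all_field.
Set Implicit Arguments. Unset Strict Implicit. Unset Printing Implicit Defensive.
Import GRing.Theory.
Local Open Scope ring_scope.

Section Trellis.
Variables (F : finFieldType) (n : nat).

(* Spans over Z_n (indices 'I_n, successor ordS).
   SEmpty = degenerate span of length -1; SArc a l = (a,l) with 0<=l<=n-1;
   SFull = degenerate span Z_n (length n). *)
Inductive tspan := SEmpty | SArc of 'I_n & 'I_n | SFull.

Definition offset (a i : 'I_n) : nat := ((i + n - a) %% n)%N.

Definition in_closed (s : tspan) (i : 'I_n) : bool :=
  match s with
  | SEmpty => false
  | SArc a l => (offset a i <= l)%N
  | SFull => true
  end.

Definition in_half (s : tspan) (i : 'I_n) : bool :=
  match s with
  | SEmpty => false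
  | SArc a l => (0 < offset a i <= l)%N
  | SFull => true
  end.

Definition span_le (s1 s2 : tspan) : bool :=
  match s1, s2 with
  | SEmpty, _ => true
  | _, SFull => true
  | SArc a1 l1, SArc a2 l2 =>
      [&& (l1 <= l2)%N, (l2 < n.-1)%N & [forall i, in_closed s1 i ==> in_closed s2 i]]
      || ((l2 == n.-1 :> nat) && [forall i, in_half s1 i ==> in_half s2 i])
  | SFull, SArc a2 l2 =>
      (l2 == n.-1 :> nat) && [forall i, in_half s1 i ==> in_half s2 i]
  | _, SEmpty => false
  end.

Definition is_span_of (alpha : 'rV[F]_n) (s : tspan) : Prop :=
  forall i : 'I_n, alpha 0 i != 0 -> in_closed s i.

Definition is_min_span_of (alpha : 'rV[F]_n) (s : tspan) : Prop :=
  is_span_of alpha s /\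
  forall s', span_le s' s -> s' <> s -> ~ is_span_of alpha s'.

(* A trellis of length n whose vertex set V_i is (a copy of) the F-vector space
   F^(tdim i), with edge sets E_i subsets of V_i x F x V_{i+1}. *)
Record trellis := Trellis {
  tdim : 'I_n -> nat;
  tedge : forall i : 'I_n, {set 'rV[F]_(tdim i) * F * 'rV[F]_(tdim (ordS i))}
}.

Definition nverts (T : trellis) (i : 'I_n) : nat := #|{: 'rV[F]_(tdim T i)}|.

Definition is_linear (T : trellis) : Prop :=
  forall i : 'I_n,
    (0, 0, 0) \in tedge T i /\
    forall (c : F) e e', e \in tedge T i -> e' \in tedge T i ->
      (c *: e.1.1 + e'.1.1, c * e.1.2 + e'.1.2, c *: e.2 + e'.2) \in tedge T i.

Definition closed_path (T : trellis) (v : forall i, 'rV[F]_(tdim T i))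
  (c : 'rV[F]_n) : Prop :=
  forall i : 'I_n, (v i, c 0 i, v (ordS i)) \in tedge T i.

Definition code_of (T : trellis) (c : 'rV[F]_n) : Prop :=
  exists v, @closed_path T v c.

Definition is_trim (T : trellis) : Prop :=
  (forall (j : 'I_n) (x : 'rV[F]_(tdim T j)),
      exists v c, @closed_path T v c /\ v j = x) /\
  (forall (j : 'I_n) e, e \in tedge T j ->
      exists v c, @closed_path T v c /\ (v j, c 0 j, v (ordS j)) = e).

Definition represents (T : trellis) (C : {vspace 'rV[F]_n}) : Prop :=
  forall c, c \in C <-> code_of T c.

Definition smaller (T' T : trellis) : Prop :=
  (forall i, (nverts T' i <= nverts T i)%N) /\
  exists i, (nverts T' i < nverts T i)%N.

Definition minimal_linear_trellis (C : {vspace 'rV[F]_n}) (T : trellis) : Prop :=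
  [/\ is_linear T, is_trim T, represents T C &
      forall T', is_linear T' -> is_trim T' -> represents T' C -> ~ smaller T' T].

(* elementary trellis alpha|s : V_i = F if i in (a,a+l], else 0;
   E_i = < (u_i, alpha_i, u_{i+1}) >.  const_mx 1 is (1) in F^1 and 0 in F^0. *)
Definition elem_trellis (alpha : 'rV[F]_n) (s : tspan) : trellis :=
  @Trellis (fun i => if in_half s i then 1%N else 0%N)
    (fun i => [set ((c *: const_mx 1), c * alpha 0 i, (c *: const_mx 1)) | c : F]).

(* product T (x) T' ; V_i(T) x V_i(T') is realized as F^(d_i + d'_i) via row_mx *)
Definition prod_trellis (T T' : trellis) : trellis :=
  @Trellis (fun i => (tdim T i + tdim T' i)%N)
    (fun i => [set (row_mx e.1.1 e'.1.1, e.1.2 + e'.1.2, row_mx e.2 e'.2)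
              | e in tedge T i, e' in tedge T' i]).

Definition unit_trellis : trellis :=
  @Trellis (fun _ => 0%N) (fun i => [set (0, 0, 0)]).

Definition prod_elem (s : seq ('rV[F]_n * tspan)) : trellis :=
  foldr (fun x T => prod_trellis (elem_trellis x.1 x.2) T) unit_trellis s.

End Trellis.

Arguments SEmpty {n}.
Arguments SFull {n}.

From mathcomp Require Import all_boot all_order all_algebra all_field perm.
From mathcomp Require Import zify.
Set Implicit Arguments. Unset Strict Implicit. Unset Printing Implicit Defensive.
Import GRing.Theory.
Local Open Scope ring_scope.

(* Minimality of T forces each alpha_j to be nonzero at the
   start a_j of its span, since otherwise that span could lose its first position
   and the state spaces would shrink (or, for a one-point span, alpha_j = 0).
   Hence beta_j = r_j alpha_j + delta_j with r_j != 0 and delta_j vanishing at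
   a_j, so the coordinate matrix of the beta_j
   in the basis alpha is diag(r) + D, with D that of the delta_j. Expanding its
   determinant over the sets S of rows taken from D, if it vanished then some
   S != set0 would make "delta_j for j in S, alpha_j otherwise" a basis of C whose
   spans are shorter, again contradicting minimality. The trellis of the beta_j
   has the same state space sizes as T, so it is minimal as well. *)

Section CyclicOffset.
Variable n : nat.
Implicit Types a i : 'I_n.

Lemma offsetE a i : offset a i = if (a <= i)%N then (i - a)%N else (i + n - a)%N.
Proof.
rewrite /offset; case: leqP => h.
  have -> : (i + n - a = (i - a) + n)%N by lia.
  rewrite modnDr modn_small //; have := ltn_ord i; lia.
rewrite modn_small //; have := ltn_ord a; lia.
Qed.

Lemma ordSE i : val (ordS i) = if i.+1 == n then 0%N else i.+1.
Proof.
rewrite /=; case: eqP => [->|h]; first by rewrite modnn.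
rewrite modn_small //; have := ltn_ord i; lia.
Qed.

Lemma offset_lt a i : (offset a i < n)%N.
Proof. rewrite offsetE; have := ltn_ord i; have := ltn_ord a; case: (leqP a i); lia. Qed.

Lemma offset_ordSr a i :
  offset a (ordS i) = if offset a i == n.-1 then 0%N else (offset a i).+1.
Proof.
rewrite !offsetE ordSE; have := ltn_ord i; have := ltn_ord a.
case: (i.+1 =P n) => h1.
  case: (leqP a 0) => h3; case: (leqP a i) => h2; case: eqP => h4; lia.
case: (leqP a i.+1) => h3; case: (leqP a i) => h2; case: eqP => h4; lia.
Qed.

Lemma offset_ordSl a i :
  offset (ordS a) i = if offset a i == 0%N then n.-1 else (offset a i).-1.
Proof.
rewrite !offsetE ordSE; have := ltn_ord i; have := ltn_ord a.
case: (a.+1 =P n) => h1.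
  case: (leqP 0 i) => h3; case: (leqP a i) => h2; case: eqP => h4; lia.
case: (leqP a.+1 i) => h3; case: (leqP a i) => h2; case: eqP => h4; lia.
Qed.

Lemma offset_inj a : injective (offset a).
Proof.
move=> i j; rewrite !offsetE => h; apply/val_inj => /=.
move: h; have := ltn_ord i; have := ltn_ord j; have := ltn_ord a.
case: (leqP a i); case: (leqP a j); lia.
Qed.

Lemma offsetnn a : offset a a = 0%N.
Proof. by rewrite offsetE leqnn subnn. Qed.

Lemma offset_eq0 a i : (offset a i == 0%N) = (i == a).
Proof.
apply/eqP/eqP => [h|->]; last exact: offsetnn.
by apply: (@offset_inj a); rewrite h offsetnn.
Qed.

Lemma offset_iter a t : (t < n)%N -> offset a (iter t (@ordS n) a) = t.
Proof.
elim: t => [_|t IH lt]; first exact: offsetnn.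
rewrite iterS offset_ordSr IH; last lia.
case: eqP => //; lia.
Qed.

Lemma iter_offset a i : iter (offset a i) (@ordS n) a = i.
Proof. by apply: (@offset_inj a); rewrite offset_iter // offset_lt. Qed.

End CyclicOffset.

Section Spans.
Variables (F : finFieldType) (n : nat).
Implicit Types (a i l : 'I_n) (d : 'rV[F]_n).

(* [a+1, a+l]; for l = 0 this is the point span at a+1, not the empty span. *)
Definition span_tail a l : tspan n :=
  SArc (ordS a) (Ordinal (leq_ltn_trans (leq_pred l) (ltn_ord l))).

Lemma in_half_span_tail a l i : in_half (span_tail a l) i -> in_half (SArc a l) i.
Proof.
rewrite /= offset_ordSl; case: eqP => _; last lia.
by have := ltn_ord l; have := offset_lt a i; lia.
Qed.

Lemma in_half_span_tail_ordS a l : (0 < l)%N ->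
  in_half (SArc a l) (ordS a) && ~~ in_half (span_tail a l) (ordS a).
Proof.
move=> l_gt0; rewrite /= offset_ordSl offset_ordSr offsetnn.
have n_gt1 : (1 < n)%N by have := ltn_ord l; lia.
by case: eqP => h1; [lia | case: eqP => h2; lia].
Qed.

Lemma span_tail_lt a l : (0 < l)%N ->
  span_le (span_tail a l) (SArc a l) /\ span_tail a l <> SArc a l.
Proof.
move=> l_gt0; split; last by case=> _ /(congr1 val) /=; lia.
have := ltn_ord l; rewrite /span_tail /span_le => l_lt.
case: (ltnP l n.-1) => l_n.
  apply/orP; left; apply/and3P; split => //=; first lia.
  apply/forallP => i /=; rewrite offset_ordSl; case: eqP => _; last lia.
  by have := offset_lt a i; lia.
apply/orP; right; apply/andP; split; first by apply/eqP; lia.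
by apply/forallP => i; apply/implyP; apply: in_half_span_tail.
Qed.

Lemma is_span_of_tail d a l :
  is_span_of d (SArc a l) -> d 0 a = 0 -> is_span_of d (span_tail a l).
Proof.
move=> d_span da0 i di /=; rewrite offset_ordSl offset_eq0.
case: eqP => [ia|_]; first by move: di; rewrite ia da0 eqxx.
by have /= := d_span i di; lia.
Qed.

Lemma span_point_eq0 d a l : l = 0%N :> nat ->
  is_span_of d (SArc a l) -> d 0 a = 0 -> d = 0.
Proof.
move=> l0 d_span da0; apply/rowP => i; rewrite mxE.
have [//|/eqP/d_span] := d 0 i =P 0.
by rewrite /= l0 leqn0 offset_eq0 => /eqP->.
Qed.

Lemma is_span_ofB d1 d2 s : is_span_of d1 s -> is_span_of d2 s -> is_span_of (d1 - d2) s.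
Proof.
move=> h1 h2 i; rewrite !mxE.
have [e1|/eqP/h1 //] := d1 0 i =P 0; have [e2|/eqP/h2 //] := d2 0 i =P 0.
by rewrite e1 e2 subrr eqxx.
Qed.

Lemma is_span_ofZ (c : F) d s : is_span_of d s -> is_span_of (c *: d) s.
Proof. by move=> h i; rewrite !mxE mulf_eq0 negb_or => /andP[_ /h]. Qed.

Lemma min_span_start d a l : is_min_span_of d (SArc a l) -> d 0 a != 0.
Proof.
move=> [d_span d_min]; apply/eqP => da0; case: (posnP l) => [l0|l_gt0].
  by apply: (d_min SEmpty) => // i; rewrite (span_point_eq0 l0 d_span da0) mxE eqxx.
have [le ne] := span_tail_lt a l_gt0.
exact: d_min le ne (is_span_of_tail d_span da0).
Qed.

Lemma min_span_arc d s : (0 < n)%N -> s <> SEmpty -> is_min_span_of d s ->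
  exists a l, s = SArc a l.
Proof.
case: s => [|a l|] n_gt0 s_ne0 [_ d_min]; [by [] | by exists a, l | exfalso].
have n1_lt : (n.-1 < n)%N by lia.
apply: (d_min (SArc (Ordinal n_gt0) (Ordinal n1_lt))) => // i _ /=.
by have := offset_lt (Ordinal n_gt0) i; lia.
Qed.

End Spans.

Section Trellises.
Variables (F : finFieldType) (n : nat).
Local Notation trellis := (trellis F n).

Lemma tdim_prod_elem (L : seq ('rV[F]_n * tspan n)) i :
  tdim (prod_elem L) i = (\sum_(x <- L) in_half x.2 i)%N.
Proof. by elim: L => [|x L IH]; rewrite ?big_nil // big_cons /= IH; case: in_half. Qed.

Lemma is_linear_unit : is_linear (unit_trellis F n).
Proof.
move=> i; split=> [|c e e']; first by rewrite inE.
by rewrite !inE => /eqP-> /eqP->; rewrite /= !scaler0 mulr0 !addr0.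
Qed.

Lemma is_linear_elem (d : 'rV[F]_n) s : is_linear (elem_trellis d s).
Proof.
move=> i; split; first by apply/imsetP; exists 0; rewrite ?scale0r ?mul0r.
move=> c _ _ /imsetP[x _ ->] /imsetP[y _ ->]; apply/imsetP; exists (c * x + y) => //.
by rewrite !scalerDl !scalerA mulrDl mulrA.
Qed.

Lemma is_linear_prod (T T' : trellis) :
  is_linear T -> is_linear T' -> is_linear (prod_trellis T T').
Proof.
move=> lin lin' i; have [T0 TD] := lin i; have [T'0 T'D] := lin' i; split.
  by apply/imset2P; exists (0, 0, 0) (0, 0, 0); rewrite //= !row_mx0 addr0.
move=> c _ _ /imset2P[e1 e2 h1 h2 ->] /imset2P[e1' e2' h1' h2' ->] /=.
apply/imset2P; exists (c *: e1.1.1 + e1'.1.1, c * e1.1.2 + e1'.1.2, c *: e1.2 + e1'.2)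
                      (c *: e2.1.1 + e2'.1.1, c * e2.1.2 + e2'.1.2, c *: e2.2 + e2'.2).
- exact: TD.
- exact: T'D.
by rewrite /= !scale_row_mx !add_row_mx mulrDr addrACA.
Qed.

Lemma is_linear_prod_elem (L : seq ('rV[F]_n * tspan n)) : is_linear (prod_elem L).
Proof.
elim: L => [|x L IH]; first exact: is_linear_unit.
exact: is_linear_prod (is_linear_elem _ _) IH.
Qed.

Lemma is_trim_unit : is_trim (unit_trellis F n).
Proof.
have path0 : closed_path (T := unit_trellis F n) (fun _ => 0) 0 by move=> i; rewrite inE mxE.
split=> [j x|j e]; first by exists (fun _ => 0), 0; split; last by apply/rowP => -[].
by rewrite inE => /eqP->; exists (fun _ => 0), 0; rewrite mxE.
Qed.

Lemma is_trim_elem (d : 'rV[F]_n) s : is_trim (elem_trellis d s).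
Proof.
have path x : closed_path (T := elem_trellis d s) (fun _ => x *: const_mx 1) (x *: d).
  by move=> i; apply/imsetP; exists x; rewrite ?mxE.
split=> [j v|j e /imsetP[x _ ->]]; last first.
  by exists (fun _ => x *: const_mx 1), (x *: d); rewrite mxE.
have {v} [x ->] : exists x, v = x *: const_mx 1.
  move: v; rewrite /=; case: in_half => v; last by exists 0; apply/rowP => -[].
  by exists (v 0 0); apply/rowP => m; rewrite !mxE mulr1 (ord1 m).
by exists (fun _ => x *: const_mx 1), (x *: d).
Qed.

Lemma closed_path_prod (T T' : trellis) v c v' c' :
  closed_path v c -> closed_path v' c' ->
  closed_path (T := prod_trellis T T') (fun i => row_mx (v i) (v' i)) (c + c').
Proof.
move=> p p' i; apply/imset2P.
exists (v i, c 0 i, v (ordS i)) (v' i, c' 0 i, v' (ordS i)).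
- exact: p.
- exact: p'.
by rewrite mxE.
Qed.

Lemma is_trim_prod (T T' : trellis) : is_trim T -> is_trim T' -> is_trim (prod_trellis T T').
Proof.
move=> [vT eT] [vT' eT']; split.
  move=> j x; have [v [c [p xl]]] := vT j (lsubmx (x : 'rV_(tdim T j + tdim T' j))).
  have [v' [c' [p' xr]]] := vT' j (rsubmx (x : 'rV_(tdim T j + tdim T' j))).
  exists (fun i => row_mx (v i) (v' i)), (c + c').
  by split; [exact: closed_path_prod | rewrite xl xr hsubmxK].
move=> j _ /imset2P[e e' /eT[v [c [p <-]]] /eT'[v' [c' [p' <-]]] ->].
exists (fun i => row_mx (v i) (v' i)), (c + c').
by split; [exact: closed_path_prod | rewrite mxE].
Qed.

Lemma is_trim_prod_elem (L : seq ('rV[F]_n * tspan n)) : is_trim (prod_elem L).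
Proof.
elim: L => [|x L IH]; first exact: is_trim_unit.
exact: is_trim_prod (is_trim_elem _ _) IH.
Qed.

End Trellises.

Section Codes.
Variables (F : finFieldType) (n : nat).
Local Notation trellis := (trellis F n).

Lemma eq_on_closed_arc (T : Type) (x : 'I_n -> T) a l :
  (forall j, in_half (SArc a l) (ordS j) -> x j = x (ordS j)) ->
  forall i, in_closed (SArc a l) i -> x i = x a.
Proof.
move=> x_step i /= i_arc; rewrite -(iter_offset a i).
elim: (offset a i) i_arc => [//|t IH] lt_t; rewrite iterS -x_step ?IH //=; first lia.
by rewrite -iterS offset_iter; [lia | have := ltn_ord l; lia].
Qed.

Lemma scale_const_mx1_inj m : (0 < m)%N -> injective (fun x : F => x *: (const_mx 1 : 'rV_m)).
Proof. by move=> m_gt0 x y /rowP /(_ (Ordinal m_gt0)); rewrite !mxE !mulr1. Qed.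

Lemma code_elem (d : 'rV[F]_n) s c : is_span_of d s ->
  code_of (elem_trellis d s) c <-> exists x, c = x *: d.
Proof.
move=> d_span; split=> [[v p]|[x ->]]; last first.
  by exists (fun _ => x *: const_mx 1) => i; apply/imsetP; exists x; rewrite ?mxE.
have /fin_all_exists[x xE] : forall i, exists x : F,
    (v i, c 0 i, v (ordS i)) = (x *: const_mx 1, x * d 0 i, x *: const_mx 1).
  by move=> i; have /imsetP[x _ ->] := p i; exists x.
have x_step j : in_half s (ordS j) -> x j = x (ordS j).
  move=> hj; case: (xE j) => _ _ vj; case: (xE (ordS j)) => vj' _ _.
  apply: (@scale_const_mx1_inj (tdim (elem_trellis d s) (ordS j))); first by rewrite /= hj.
  by rewrite /= -vj -vj'.
have {xE p v} cE i : c 0 i = x i * d 0 i by case: (xE i).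
(* the labels are x_i d_i, and x is constant along any arc inside the state space *)
have on_arc a l : (forall i, d 0 i != 0 -> in_closed (SArc a l) i) ->
    (forall j, in_half (SArc a l) (ordS j) -> in_half s (ordS j)) -> c = x a *: d.
  move=> d_arc arc_s; apply/rowP => i; rewrite cE mxE.
  have [->|/eqP/d_arc di] := d 0 i =P 0; first by rewrite !mulr0.
  by rewrite (eq_on_closed_arc (x := x) _ di) // => j /arc_s /x_step.
case: s d_span x_step on_arc => [|a l|] d_span _ on_arc.
- exists 0; apply/rowP => i; rewrite cE !mxE.
  by have [->|/eqP/d_span //] := d 0 i =P 0; rewrite !mulr0.
- by exists (x a); apply: (on_arc _ _ d_span).
have [n0|n_gt0] := posnP n; first by exists 0; apply/rowP => i; have := ltn_ord i; rewrite {2}n0.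
have n1_lt : (n.-1 < n)%N by lia.
exists (x (Ordinal n_gt0)); apply: (on_arc _ (Ordinal n1_lt)) => // i _ /=.
by have := offset_lt (Ordinal n_gt0) i; lia.
Qed.

Lemma code_prod (T T' : trellis) c :
  code_of (prod_trellis T T') c <-> exists c1 c2, [/\ c = c1 + c2, code_of T c1 & code_of T' c2].
Proof.
split=> [[v p]|[c1 [c2 [-> [v1 p1] [v2 p2]]]]]; last first.
  by exists (fun i => row_mx (v1 i) (v2 i)); apply: closed_path_prod.
have /fin_all_exists[c1 c1E] : forall i, exists x : F, exists2 e1, e1 \in tedge T i &
    exists2 e2, e2 \in tedge T' i &
    (v i, c 0 i, v (ordS i)) = (row_mx e1.1.1 e2.1.1, x + e2.1.2, row_mx e1.2 e2.2)
    /\ e1.1.2 = x.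
  move=> i; have /imset2P[e1 e2 h1 h2 E] := p i.
  by exists e1.1.2; exists e1 => //; exists e2.
exists (\row_i c1 i), (c - \row_i c1 i); split; first by rewrite addrC subrK.
  exists (fun i => lsubmx (v i : 'rV_(tdim T i + tdim T' i))) => i; rewrite mxE.
  have [[[x y] z] e1T [e2 _ [[-> _ ->] /= <-]]] := c1E i.
  by rewrite !row_mxKl.
exists (fun i => rsubmx (v i : 'rV_(tdim T i + tdim T' i))) => i; rewrite !mxE.
have [e1 _ [[[x y] z] e2T [[-> -> ->] _]]] := c1E i.
by rewrite !row_mxKr addrC addKr.
Qed.

Lemma code_unit c : code_of (unit_trellis F n) c <-> c = 0.
Proof.
split=> [[v p]|->]; last by exists (fun _ => 0) => i; rewrite inE mxE.
by apply/rowP => i; have := p i; rewrite inE !mxE => /eqP[_ ->].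
Qed.

Lemma code_prod_elem k (g : 'I_k -> 'rV[F]_n) (t : 'I_k -> tspan n) (r : seq 'I_k) c :
  (forall j, is_span_of (g j) (t j)) ->
  code_of (prod_elem [seq (g j, t j) | j <- r]) c <-> c \in <<[seq g j | j <- r]>>%VS.
Proof.
move=> g_span; elim: r c => [|j r IH] c /=.
  by rewrite span_nil memv0 code_unit; split=> [->|/eqP].
rewrite span_cons code_prod; split.
  move=> [c1 [c2 [-> /(code_elem _ (g_span j)) [x ->] /IH c2_in]]].
  by rewrite memv_add // memvZ ?memv_line.
move/memv_addP => [y /vlineP [x ->] [z /IH z_code ->]].
by exists (x *: g j), z; split => //; apply/(code_elem _ (g_span j)); exists x.
Qed.

End Codes.

Section DetExpansion.
Variables (R : comPzRingType) (m : nat).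

Definition mxpatch (S : {set 'I_m}) (W : 'M[R]_m) : 'M[R]_m :=
  \matrix_(i, j) if i \in S then W i j else (i == j)%:R.

Lemma det_diag_add (d : 'rV[R]_m) (W : 'M[R]_m) :
  \det (diag_mx d + W) = \sum_(S : {set 'I_m}) (\prod_(i in ~: S) d 0 i) * \det (mxpatch S W).
Proof.
have row_split (S : {set 'I_m}) (sigma : 'S_m) :
    \prod_i (if i \in S then W i (sigma i) else d 0 i *+ (i == sigma i)) =
    (\prod_(i in ~: S) d 0 i) * \prod_i mxpatch S W i (sigma i).
  rewrite (big_mkcond (mem (~: S))) -big_split /=; apply: eq_bigr => i _.
  by rewrite !mxE inE; case: (i \in S); rewrite ?mul1r ?mulr_natr.
rewrite /determinant (eq_bigr (fun sigma : 'S_m => (-1) ^+ sigma * \sum_(S : {set 'I_m})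
    (\prod_(i in ~: S) d 0 i) * \prod_i mxpatch S W i (sigma i))); last first.
  move=> sigma _; congr (_ * _); under eq_bigr => i _ do rewrite !mxE addrC.
  by rewrite bigA_distr; apply: eq_bigr => S _; rewrite row_split.
under eq_bigr do rewrite mulr_sumr.
rewrite exchange_big; apply: eq_bigr => S _ /=; rewrite mulr_sumr.
by apply: eq_bigr => sigma _; rewrite mulrCA.
Qed.

Lemma det_diag_add_neq (d : 'rV[R]_m) (W : 'M[R]_m) :
  \det (diag_mx d + W) != \prod_i d 0 i ->
  exists2 S : {set 'I_m}, S != set0 & \det (mxpatch S W) != 0.
Proof.
have patch0 : mxpatch set0 W = 1%:M by apply/matrixP => i j; rewrite !mxE inE.
have prodT : \prod_(i in ~: set0) d 0 i = \prod_i d 0 i.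
  by apply: eq_bigl => i; rewrite setC0 in_setT.
rewrite det_diag_add (bigD1 set0) //= patch0 det1 mulr1 prodT => ne.
suff /existsP[S /andP[]] : [exists S : {set 'I_m}, (S != set0) && (\det (mxpatch S W) != 0)].
  by exists S.
apply: contraNT ne => /existsPn none; rewrite [\sum_(_ | _) _]big1 ?addr0 // => S S_ne0.
by have := none S; rewrite S_ne0 /= negbK => /eqP->; rewrite mulr0.
Qed.
End DetExpansion.

Section CoordinateMatrix.
Variables (F : fieldType) (vT : vectType F) (k : nat) (X : k.-tuple vT).

Definition coordmx (g : 'I_k -> vT) : 'M[F]_k := \matrix_(i, j) coord X j (g i).

Lemma free_coordmx (g : 'I_k -> vT) :
  \det (coordmx g) != 0 -> free [seq g i | i <- enum 'I_k].
Proof.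
move=> det_ne0; change (free [tuple g i | i < k]); apply/freeP => mu mu_g0 i.
have mu_ker : \row_i mu i *m coordmx g = 0.
  apply/rowP => j; rewrite !mxE -[RHS](linear0 (coord X j)) -mu_g0 linear_sum.
  by apply: eq_bigr => i' _; rewrite !mxE linearZ nth_mktuple.
have /(congr1 (mulmx^~ (invmx (coordmx g)))) := mu_ker.
by rewrite mulmxK ?unitmxE ?unitfE // mul0mx => /rowP/(_ i); rewrite !mxE.
Qed.

Lemma basis_of_coordmx (U : {vspace vT}) (g : 'I_k -> vT) :
  (forall i, g i \in U) -> \dim U = k -> \det (coordmx g) != 0 ->
  basis_of U [seq g i | i <- enum 'I_k].
Proof.
move=> gU dimU det_ne0; rewrite basisEfree free_coordmx //= size_map size_enum_ord dimU leqnn.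
by rewrite andbT; apply/span_subvP => _ /mapP[i _ ->].
Qed.

Hypothesis freeX : free X.

Lemma coordmx_diag_add (d : 'rV[F]_k) (g w : 'I_k -> vT) :
  (forall i, g i = d 0 i *: X`_i + w i) -> coordmx g = diag_mx d + coordmx w.
Proof.
move=> gE; apply/matrixP => i j.
by rewrite !mxE gE linearD linearZ /= coord_free // mulr_natr.
Qed.

Lemma coordmx_patch (S : {set 'I_k}) (w : 'I_k -> vT) :
  coordmx (fun i => if i \in S then w i else X`_i) = mxpatch S (coordmx w).
Proof. by apply/matrixP => i j; rewrite !mxE; case: ifP; rewrite ?coord_free. Qed.

End CoordinateMatrix.

Section ElementaryProducts.
Variables (F : finFieldType) (n k : nat).
Local Notation elems g t := (prod_elem [seq (g j, t j) | j <- enum 'I_k]).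
Implicit Types (g h : 'I_k -> 'rV[F]_n) (s t : 'I_k -> tspan n).

Lemma nverts_prod_elem g t i :
  nverts (elems g t) i = (#|F| ^ (\sum_(j <- enum 'I_k) in_half (t j) i))%N.
Proof. by rewrite /nverts card_mx mul1n tdim_prod_elem big_map. Qed.

Lemma smaller_prod_elem g h t s :
  (forall j i, in_half (t j) i -> in_half (s j) i) ->
  (exists j i, in_half (s j) i && ~~ in_half (t j) i) ->
  smaller (elems g t) (elems h s).
Proof.
move=> ts [j0 [i0 /andP[s0 t0]]]; have F_gt1 := finNzRing_gt1 F.
have le_half j i : (in_half (t j) i <= in_half (s j) i)%N.
  by have := ts j i; case: in_half; case: in_half => // /(_ isT).
split=> [i|]; first by rewrite !nverts_prod_elem leq_exp2l //; apply: leq_sum.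
exists i0; rewrite !nverts_prod_elem ltn_exp2l //.
rewrite !(bigD1_seq j0 (mem_enum _ j0) (enum_uniq _)) /= s0 (negbTE t0) add0n add1n ltnS.
exact: leq_sum.
Qed.

Lemma represents_prod_elem (C : {vspace 'rV[F]_n}) g t :
  (forall j, is_span_of (g j) (t j)) ->
  represents (elems g t) C <-> C = <<[seq g j | j <- enum 'I_k]>>%VS.
Proof.
move=> g_span; split=> [rep|-> c]; last by rewrite code_prod_elem.
have codeE c : code_of (elems g t) c <-> c \in <<[seq g j | j <- enum 'I_k]>>%VS.
  exact: code_prod_elem.
by apply/vspaceP => c; apply/idP/idP => [/rep/codeE | /codeE/rep].
Qed.

End ElementaryProducts.

Section MinimalTrellis.
Variables (F : finFieldType) (n k : nat) (C : {vspace 'rV[F]_n}).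
Variables (alpha : 'I_k -> 'rV[F]_n) (s : 'I_k -> tspan n) (a l : 'I_k -> 'I_n).
Local Notation elems g t := (prod_elem [seq (g j, t j) | j <- enum 'I_k]).
Hypotheses (dimC : \dim C = k) (sE : forall j, s j = SArc (a j) (l j)).
Hypotheses (alpha_span : forall j, is_span_of (alpha j) (s j))
           (Tmin : minimal_linear_trellis C (elems alpha s)).

Lemma minimal_gens_basis : basis_of C [seq alpha j | j <- enum 'I_k].
Proof.
have [_ _ /(represents_prod_elem _ alpha_span) CE _] := Tmin.
by rewrite basisEdim -CE subvv size_map size_enum_ord dimC /=.
Qed.

(* Otherwise the spans of the g_j with j in S could be shortened by their first
   position, giving a smaller linear trellis for C. *)
Lemma vanishing_starts_set0 (g : 'I_k -> 'rV[F]_n) (S : {set 'I_k}) :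
  basis_of C [seq g j | j <- enum 'I_k] -> (forall j, is_span_of (g j) (s j)) ->
  (forall j, j \in S -> g j 0 (a j) = 0) -> S = set0.
Proof.
move=> gB g_span g_start; apply/setP => j0; rewrite inE; apply/negbTE/negP => j0S.
have g_ne0 : g j0 != 0 by apply: (basis_not0 gB); apply: map_f; rewrite mem_enum.
have [l0|l_gt0] := posnP (l j0).
  by move: g_ne0; rewrite (span_point_eq0 l0 _ (g_start j0 j0S)) ?eqxx // -sE.
pose t j := if j \in S then span_tail (a j) (l j) else s j.
have t_span j : is_span_of (g j) (t j).
  by rewrite /t; case: ifP => [jS|_] //; apply: is_span_of_tail; rewrite -?sE ?g_start.
have [_ _ _ T_min] := Tmin; apply: (T_min (elems g t)).
- exact: is_linear_prod_elem.
- exact: is_trim_prod_elem.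
- by apply/(represents_prod_elem _ t_span); case/andP: gB => /eqP.
apply: smaller_prod_elem.
  by move=> j i; rewrite /t sE; case: ifP => // _; apply: in_half_span_tail.
by exists j0, (ordS (a j0)); rewrite /t j0S sE in_half_span_tail_ordS.
Qed.

Lemma minimal_gens_start j : alpha j 0 (a j) != 0.
Proof.
apply/eqP => alpha_a0; suff /setP/(_ j) : [set j] = set0 by rewrite !inE eqxx.
by apply: (vanishing_starts_set0 minimal_gens_basis alpha_span) => i /set1P->.
Qed.

Lemma minimal_prod_elem_basis (g : 'I_k -> 'rV[F]_n) :
  basis_of C [seq g j | j <- enum 'I_k] -> (forall j, is_span_of (g j) (s j)) ->
  minimal_linear_trellis C (elems g s).
Proof.
move=> gB g_span; have [_ _ _ T_min] := Tmin; split.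
- exact: is_linear_prod_elem.
- exact: is_trim_prod_elem.
- by apply/(represents_prod_elem _ g_span); case/andP: gB => /eqP.
have nvertsE i : nverts (elems g s) i = nverts (elems alpha s) i by rewrite !nverts_prod_elem.
move=> T' lin' trim' rep' [le [i lt]]; apply: (T_min T' lin' trim' rep').
by split=> [j|]; [rewrite -nvertsE | exists i; rewrite -nvertsE].
Qed.

Variable beta : 'I_k -> 'rV[F]_n.
Hypotheses (beta_C : forall j, beta j \in C)
           (beta_min : forall j, is_min_span_of (beta j) (s j)).

Lemma min_span_basis : basis_of C [seq beta j | j <- enum 'I_k].
Proof.
pose X := [tuple alpha j | j < k]; have freeX : free X := basis_free minimal_gens_basis.
have XE (j : 'I_k) : X`_j = alpha j by rewrite nth_mktuple.
have alpha_C j : alpha j \in C.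
  by apply: (basis_mem minimal_gens_basis); apply: map_f; rewrite mem_enum.
pose r := \row_j (beta j 0 (a j) / alpha j 0 (a j)).
pose delta j := beta j - r 0 j *: alpha j.
have [det0|det_ne0] := eqVneq (\det (coordmx X beta)) 0;
  last exact: basis_of_coordmx beta_C dimC det_ne0.
have betaE j : beta j = r 0 j *: X`_j + delta j by rewrite XE addrC subrK.
have r_ne0 j : r 0 j != 0.
  have := beta_min j; rewrite sE => /min_span_start beta_a.
  by rewrite mxE mulf_neq0 ?invr_eq0 ?minimal_gens_start.
rewrite (coordmx_diag_add freeX betaE) in det0.
have [|S S_ne0] := det_diag_add_neq (d := r) (W := coordmx X delta).
  by rewrite det0 eq_sym prodf_seq_neq0; apply/allP => j _; rewrite r_ne0.
rewrite -coordmx_patch // => detS; case/eqP: S_ne0.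
pose g j := if j \in S then delta j else X`_j.
have delta_span j : is_span_of (delta j) (s j).
  by apply: is_span_ofB; [exact: (beta_min j).1 | exact: is_span_ofZ].
apply: (vanishing_starts_set0 (g := g)).
- apply: basis_of_coordmx detS => [j|//]; rewrite /g XE.
  by case: ifP => // _; rewrite rpredB ?rpredZ.
- by move=> j; rewrite /g XE; case: ifP.
by move=> j jS; rewrite /g jS !mxE divfK ?subrr ?minimal_gens_start.
Qed.

End MinimalTrellis.

Theorem mainTheorem16 (F : finFieldType) (n k : nat) (C : {vspace 'rV[F]_n})
  (alpha beta : 'I_k -> 'rV[F]_n) (s : 'I_k -> tspan n) :
  (0 < n)%N ->
  \dim C = k ->
  (forall i : 'I_n, exists2 c, c \in C & c 0 i != 0) ->
  (forall j, s j <> SEmpty) ->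
  (forall j, is_span_of (alpha j) (s j)) ->
  minimal_linear_trellis C (prod_elem [seq (alpha j, s j) | j <- enum 'I_k]) ->
  (forall j, beta j \in C) ->
  (forall j, is_min_span_of (beta j) (s j)) ->
  basis_of C [seq beta j | j <- enum 'I_k] /\
  minimal_linear_trellis C (prod_elem [seq (beta j, s j) | j <- enum 'I_k]).
Proof.
move=> n_gt0 dimC _ s_ne0 alpha_span Tmin beta_C beta_min.
have /fin_all_exists[al sE] : forall j, exists al : 'I_n * 'I_n, s j = SArc al.1 al.2.
  by move=> j; have [a [l ->]] := min_span_arc n_gt0 (s_ne0 j) (beta_min j); exists (a, l).
have betaB := min_span_basis dimC sE alpha_span Tmin beta_C beta_min.
split=> //; apply: (minimal_prod_elem_basis Tmin betaB) => j.
exact: (beta_min j).1.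
Qed.
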